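(* Let $\alpha>0$, $\rho>0$, and let $N\ge1$ be such that $\lambda_j:=(\pi j)^2-\alpha<\rho$ for $j=1,\dots,N$ and $\lambda_j\ge\rho$ for $j\ge N+1$. Let $\rho<\gamma_1<\gamma_2<\dots<\gamma_N$. Let $\phi_j(x)=\sin(\pi jx)$, let $B_0$ be the $N\times N$ matrix with entries $(B_0)_{ij}=\phi_i'(1)\phi_j'(1)$, let $\Lambda_{\gamma_k}=\mathrm{diag}\big(\frac{1}{\gamma_k-\lambda_i}\big)_{1\le i\le N}$ and $B_k=\Lambda_{\gamma_k}B_0\Lambda_{\gamma_k}$ for $k=1,\dots,N$. Then the matrix $B_1+B_2+\dots+B_N$ is invertible. *)

From HB Require Import structures.
From mathcomp Require Import all_boot all_order all_algebra.
From mathcomp Require Import all_classical all_reals all_analysis.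
Set Implicit Arguments. Unset Strict Implicit. Unset Printing Implicit Defensive.
Import Order.TTheory GRing.Theory Num.Theory.
Local Open Scope ring_scope.

Definition lam {R : realType} (alpha : R) (j : nat) : R :=
  (pi * j%:R) ^+ 2 - alpha.

Definition phi {R : realType} (j : nat) : R -> R :=
  fun x => sin (pi * j%:R * x).

(* B0 (N x N), 0-based index i stands for mode i+1 *)
Definition B0 {R : realType} (N : nat) : 'M[R]_N :=
  \matrix_(i < N, j < N) (derive1 (phi i.+1) 1 * derive1 (phi j.+1) 1).

Definition Lam {R : realType} (N : nat) (alpha g : R) : 'M[R]_N :=
  diag_mx (\row_(i < N) (g - lam alpha i.+1)^-1).

Definition Bk {R : realType} (N : nat) (alpha g : R) : 'M[R]_N :=
  Lam N alpha g *m B0 N *m Lam N alpha g.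

(* Writing c_i = phi_i'(1) = (-1)^i pi i, the entries of B_k are
   c_i c_j / ((gamma_k - lambda_i) (gamma_k - lambda_j)), so the sum of the B_k is V V^T
   with V = diag(c) C, where C_ik = 1 / (gamma_k - lambda_i) is a Cauchy matrix.
   The c_i are nonzero, and C is invertible because the lambda_i are distinct, the gamma_k
   are distinct and lambda_i < rho < gamma_k: if v C = 0, the numerator of the rational
   function sum_i v_i / (z - lambda_i) has degree < N and vanishes at the N points gamma_k,
   so it is zero, and evaluating it at lambda_i gives v_i = 0. *)

From HB Require Import structures.
From mathcomp Require Import all_boot all_order all_algebra.
From mathcomp Require Import all_classical all_reals all_analysis.
From mathcomp Require Import ring zify.
Set Implicit Arguments. Unset Strict Implicit. Unset Printing Implicit Defensive.
Import Order.TTheory GRing.Theory Num.Theory.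
Local Open Scope ring_scope.

Definition cauchy_mx (F : fieldType) (n : nat) (x y : 'I_n -> F) : 'M[F]_n :=
  \matrix_(i, k) (y k - x i)^-1.

Section CauchyMatrix.
Variables (F : fieldType) (n : nat) (x : 'I_n -> F).

Let prod_XsubC_omit (i : 'I_n) : {poly F} := \prod_(m | m != i) ('X - (x m)%:P).

Let size_prod_XsubC_omit i : size (prod_XsubC_omit i) = n.
Proof.
rewrite /prod_XsubC_omit -big_filter size_prod_XsubC size_filter.
rewrite -sum1_count sum1_card cardC1 card_ord.
by case: n i x => [[]|].
Qed.

Let horner_partial_fractions (a : 'I_n -> F) z : (forall m, z != x m) ->
  (\sum_i a i *: prod_XsubC_omit i).[z] = \prod_m (z - x m) * \sum_i a i / (z - x i).
Proof.
move=> z_neq_x; rewrite horner_sum mulr_sumr; apply: eq_bigr => i _.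
rewrite hornerZ /prod_XsubC_omit horner_prod [in RHS](bigD1 i) //=.
under eq_bigr do rewrite hornerXsubC.
have : z - x i != 0 by rewrite subr_eq0.
by move: (\prod_(_ | _) _) => p ?; field.
Qed.

Let horner_partial_fractions_root (a : 'I_n -> F) i :
  (\sum_j a j *: prod_XsubC_omit j).[x i] = a i * \prod_(m | m != i) (x i - x m).
Proof.
rewrite horner_sum (bigD1 i) //= big1 ?addr0.
  by rewrite hornerZ horner_prod; under eq_bigr do rewrite hornerXsubC.
move=> j ji; rewrite hornerZ horner_prod (bigD1 i) 1?eq_sym //=.
by rewrite hornerXsubC subrr mul0r mulr0.
Qed.

Lemma cauchy_mx_unit (y : 'I_n -> F) : injective x -> injective y ->
  (forall i k, y k != x i) -> cauchy_mx x y \in unitmx.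
Proof.
move=> x_inj y_inj y_neq_x; rewrite -row_free_unit; apply/inj_row_free => v vC0.
(* P is the numerator of sum_i v_i / (z - x i), so it vanishes at every y k. *)
pose P := \sum_i v 0 i *: prod_XsubC_omit i.
have P_y k : P.[y k] = 0.
  have vC0k : \sum_i v 0 i / (y k - x i) = 0.
    have := congr1 (fun w : 'rV_n => w 0 k) vC0; rewrite !mxE.
    by under eq_bigr do rewrite mxE.
  by rewrite horner_partial_fractions // vC0k mulr0.
have P_eq0 : P = 0.
  apply: (@roots_geq_poly_eq0 _ _ [seq y k | k <- enum 'I_n]).
  - by apply/allP => _ /mapP [k _ ->]; apply/rootP.
  - by rewrite map_inj_uniq ?enum_uniq.
  rewrite size_map size_enum_ord (leq_trans (size_sum _ _ _)) //.
  apply/bigmax_leqP => i _.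
  by rewrite (leq_trans (size_scale_leq _ _)) ?size_prod_XsubC_omit.
apply/rowP => i; have := horner_partial_fractions_root (v 0) i.
rewrite -/P P_eq0 horner0 mxE => /esym/eqP; rewrite mulf_eq0 prodf_seq_eq0.
case/orP=> [/eqP //|/hasP [m _ /andP [m_neq_i]]].
by rewrite subr_eq0 => /eqP/x_inj mi; rewrite mi eqxx in m_neq_i.
Qed.

End CauchyMatrix.

Lemma diag_mx_unit (F : fieldType) (n : nat) (d : 'rV[F]_n) :
  (forall i, d 0 i != 0) -> diag_mx d \in unitmx.
Proof. by move=> d_neq0; rewrite unitmxE det_diag unitfE; apply/prodf_neq0. Qed.

Lemma cos_pi_natmul (R : realType) (j : nat) : cos (pi * j%:R) = (-1) ^+ j :> R.
Proof.
elim: j => [|j IH]; first by rewrite mulr0 cos0.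
by rewrite -addn1 natrD mulrDr mulr1 cosDpi IH exprD expr1 mulrN1.
Qed.

Lemma derive1_phi_at1 (R : realType) (j : nat) :
  derive1 (@phi R j) 1 = (-1) ^+ j * (pi * j%:R).
Proof.
have -> : @phi R j = sin \o *%R (pi * j%:R) by [].
have : is_derive (1 : R) 1 (sin \o *%R (pi * j%:R)) (cos (pi * j%:R * 1) * (pi * j%:R)).
  apply: is_derive1_comp.
  have := @is_deriveZ R R R id (pi * j%:R) 1 1 1 _.
  by rewrite /= scaler1 => /(_ _); apply.
by move=> ?; rewrite derive1E derive_val mulr1 cos_pi_natmul.
Qed.

Lemma derive1_phi_at1_neq0 (R : realType) (j : nat) :
  (0 < j)%N -> derive1 (@phi R j) 1 != 0.
Proof.
move=> j_gt0; rewrite derive1_phi_at1 mulf_neq0 ?signr_eq0 //.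
by rewrite mulf_neq0 ?pnatr_eq0 -?lt0n // gt_eqF ?pi_gt0.
Qed.

Lemma lam_inj (R : realType) (alpha : R) : injective (lam alpha).
Proof.
move=> i j /eqP; rewrite /lam subr_eq addrNK eqrXn2 ?mulr_ge0 ?pi_ge0 //.
by rewrite (inj_eq (mulfI _)) ?eqr_nat => [/eqP|]; last by rewrite gt_eqF ?pi_gt0.
Qed.

Lemma sum_Bk_gram (R : realType) (N : nat) (alpha : R) (y : 'I_N -> R) :
  let V := diag_mx (\row_i derive1 (@phi R i.+1) 1) *m
           cauchy_mx (fun i : 'I_N => lam alpha i.+1) y in
  \sum_(k < N) Bk N alpha (y k) = V *m V^T.
Proof.
move=> V; apply/matrixP => i j; rewrite /V mul_diag_mx summxE !mxE.
apply: eq_bigr => k _; rewrite /Bk /Lam mul_diag_mx mul_mx_diag !mxE; ring.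
Qed.

Section IncreasingOnInterval.
Variables (d : Order.disp_t) (T : porderType d) (N : nat) (f : nat -> T).
Hypothesis f_step : forall k, (1 <= k < N)%N -> (f k < f k.+1)%O.

Lemma homo_lt_interval :
  {in [pred k | 1 <= k <= N]%N &, {homo f : k m / (k < m)%N >-> (k < m)%O}}.
Proof.
apply: (homo_ltn_in lt_trans) => [i j + + k|k]; rewrite !inE; first lia.
by move=> ? ?; apply: f_step; lia.
Qed.

Lemma succ_ord_inj : injective (fun k : 'I_N => f k.+1).
Proof.
move=> k m /= f_eq; apply/val_inj/eqP; rewrite -eqSS.
case: (ltngtP k.+1 m.+1) => // [lt|gt].
- have := @homo_lt_interval k.+1 m.+1.
  by rewrite !inE /= !ltn_ord f_eq ltxx => /(_ isT isT lt).
- have := @homo_lt_interval m.+1 k.+1.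
  by rewrite !inE /= !ltn_ord f_eq ltxx => /(_ isT isT gt).
Qed.

Lemma le_first_succ_ord (k : 'I_N) : (f 1 <= f k.+1)%O.
Proof.
case: (posnP k) => [-> //|k_gt0].
rewrite ltW // homo_lt_interval ?inE ?ltn_ord //=.
exact: leq_ltn_trans (leq0n k) (ltn_ord k).
Qed.

End IncreasingOnInterval.

Theorem lemma5p2 (R : realType) (alpha rho : R) (N : nat) (gamma : nat -> R)
  (halpha : 0 < alpha) (hrho : 0 < rho) (hN : (1 <= N)%N)
  (hlow : forall j : nat, (1 <= j <= N)%N -> lam alpha j < rho)
  (hhigh : forall j : nat, (N.+1 <= j)%N -> rho <= lam alpha j)
  (hg1 : rho < gamma 1%N)
  (hginc : forall k : nat, (1 <= k < N)%N -> gamma k < gamma k.+1) :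
  (\sum_(1 <= k < N.+1) Bk N alpha (gamma k)) \in unitmx.
Proof.
rewrite big_add1 big_mkord sum_Bk_gram unitmx_mul unitmx_tr andbb unitmx_mul.
apply/andP; split.
  by apply: diag_mx_unit => i; rewrite mxE derive1_phi_at1_neq0.
apply: cauchy_mx_unit.
- by move=> i j /lam_inj [/val_inj].
- exact: succ_ord_inj hginc.
move=> i k; rewrite gt_eqF // (lt_trans (hlow _ _)) ?(lt_le_trans hg1) //=.
exact: le_first_succ_ord hginc k.
Qed.
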